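(* Let $D$ be a locatable digraph and let $v$ be a vertex of $D$ that is neither domination-forced nor location-forced. Then $V(D)\setminus\{v\}$ is an open neighbourhood locating-dominating set of $D$.
   Context: Digraphs are finite and may contain loops; between two distinct vertices $u,v$ there may be the arc $uv$, the arc $vu$, or both, but no arc is repeated. For a vertex $v$, $N^-(v)=\{u : uv \text{ is an arc}\}$ is its (open) in-neighbourhood (it contains $v$ iff $v$ has a loop). A set $S\subseteq V(D)$ is an open neighbourhood locating-dominating set (OLD set) of $D$ if every vertex of $D$ has an in-neighbour in $S$, and for every pair of distinct vertices $u,w$ there is a vertex of $S$ lying in exactly one of $N^-(u)$, $N^-(w)$. $D$ is locatable if it admits an OLD set. A vertex $v$ is domination-forced if there is a vertex $w$ with $N^-(w)=\{v\}$; it is location-forced if there are two distinct vertices $x,y$ with $N^-(x)\ominus N^-(y)=\{v\}$, where $\ominus$ denotes symmetric difference. *)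

From mathcomp Require Import all_boot.
Set Implicit Arguments. Unset Strict Implicit. Unset Printing Implicit Defensive.

(* A digraph on a finite vertex type T is given by its arc relation
   [arc : rel T]; [arc u v] means uv is an arc. Loops allowed
   ([arc v v] may hold); no multiple arcs (a relation). *)

Definition in_nbhd (T : finType) (arc : rel T) (v : T) : {set T} :=
  [set u | arc u v].

Definition is_OLD (T : finType) (arc : rel T) (S : {set T}) : Prop :=
  (forall v : T, exists2 s, s \in S & s \in in_nbhd arc v) /\
  (forall u w : T, u <> w ->
     exists2 s, s \in S &
       (s \in in_nbhd arc u) != (s \in in_nbhd arc w)).

Definition locatable (T : finType) (arc : rel T) : Prop :=
  exists S : {set T}, is_OLD arc S.

Definition symdiff (T : finType) (A B : {set T}) : {set T} :=
  (A :\: B) :|: (B :\: A).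

Definition domination_forced (T : finType) (arc : rel T) (v : T) : Prop :=
  exists w : T, in_nbhd arc w = [set v].

Definition location_forced (T : finType) (arc : rel T) (v : T) : Prop :=
  exists x y : T, x <> y /\ symdiff (in_nbhd arc x) (in_nbhd arc y) = [set v].

From mathcomp Require Import all_boot.

Set Implicit Arguments.
Unset Strict Implicit.

(* Any OLD set shows that every in-neighbourhood, and the symmetric difference
   of any two distinct in-neighbourhoods, is nonempty. If v is not forced, none
   of these sets is {v}, so each contains a vertex other than v, which lies in
   V(D) \ {v} and does the job. *)

Lemma mem_symdiff (T : finType) (A B : {set T}) (x : T) :
  (x \in symdiff A B) = ((x \in A) != (x \in B)).
Proof. by rewrite !inE; case: (x \in A); case: (x \in B). Qed.

Lemma exists_mem_neq (T : finType) (A : {set T}) (x : T) :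
  A != set0 -> A != [set x] -> exists2 y, y \in A & y != x.
Proof.
move=> A_neq0 A_neq1.
have: A :\ x != set0 by rewrite setD_eq0 subset1 negb_or A_neq1.
by case/set0Pn => y; rewrite !inE => /andP[yx yA]; exists y.
Qed.

Section OLDNonempty.

Variables (T : finType) (arc : rel T) (S : {set T}).
Hypothesis S_OLD : is_OLD arc S.

Lemma OLD_in_nbhd_neq0 (w : T) : in_nbhd arc w != set0.
Proof. by case: S_OLD => /(_ w) [s _ sw] _; apply/set0Pn; exists s. Qed.

Lemma OLD_symdiff_neq0 (u w : T) :
  u <> w -> symdiff (in_nbhd arc u) (in_nbhd arc w) != set0.
Proof.
case: S_OLD => _ /[apply] [[s _ s_sep]].
by apply/set0Pn; exists s; rewrite mem_symdiff.
Qed.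

End OLDNonempty.

Theorem proposition5 (T : finType) (arc : rel T) (v : T) :
  locatable arc ->
  ~ domination_forced arc v ->
  ~ location_forced arc v ->
  is_OLD arc ([set: T] :\ v).
Proof.
move=> [S S_OLD] not_dom not_loc; split.
- move=> w; have [|t tw tv] := exists_mem_neq (x := v) (OLD_in_nbhd_neq0 S_OLD w).
    by apply/eqP => Nw; apply: not_dom; exists w.
  by exists t; rewrite // !inE tv.
- move=> u w uw; have [|t tuw tv] := exists_mem_neq (x := v) (OLD_symdiff_neq0 S_OLD uw).
    by apply/eqP => Nuw; apply: not_loc; exists u, w.
  by exists t; rewrite -?mem_symdiff // !inE tv.
Qed.
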